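(* Let $X$ be a positive càdlàg $(P,\mathbb G)$-local martingale with $X_0=1$, and let $\mathbb F\subseteq\mathbb G$ be a filtration with $\mathbb F\subseteq\mathbb F^X$. If the equivalent measure extension problem for $P$ and the pair of filtrations $\mathbb F\subseteq\mathbb G$ admits a solution, then the equivalent measure extension problem for $P$ and the pair $\mathbb F\subseteq\mathbb F^X$ also admits a solution.
   Context: $(\Omega,\mathcal F,P)$ carries filtrations satisfying the usual conditions; $\mathbb F^X$ is the (augmented) natural filtration of $X$. Let $\tau_n:=n\wedge\inf\{t\ge0:X_t\ge n\}$ and $\tau:=\lim_n\tau_n$. Given a filtration $\mathbb H\supseteq\mathbb F$ to which $X$ is adapted and for which $X$ is an $\mathbb H$-local martingale, define probability measures $Q_n$ on $\mathcal H_{\tau_n}$ by $dQ_n=X_{\tau_n}\,dP$; the Föllmer measure $Q_0$ is the probability measure on $\mathcal H_{\tau-}=\bigvee_{n}\mathcal H_{\tau_n}$ that coincides with $Q_n$ on $\mathcal H_{\tau_n}$ for every $n$. The equivalent measure extension problem for $P$ and $\mathbb F\subseteq\mathbb H$ asks for a probability measure $Q$ on $(\Omega,\mathcal H_\infty)$ such that (i) $Q=Q_0$ on $\mathcal H_{\tau-}$ and (ii) the restrictions of $P$ and $Q$ to $\mathcal F_t$ are equivalent for every $t\ge0$. *)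

From HB Require Import structures.
From mathcomp Require Import all_boot all_order all_algebra.
From mathcomp Require Import all_classical all_reals all_analysis.
Set Implicit Arguments. Unset Strict Implicit. Unset Printing Implicit Defensive.
Import Order.TTheory GRing.Theory Num.Theory.
Import numFieldNormedType.Exports.
Local Open Scope classical_set_scope.
Local Open Scope ring_scope.

Section Defs.
Context {d : measure_display} {Omega : measurableType d} {R : realType}.
Implicit Types (P : probability Omega R).

(* Continuous time is indexed by [0, +oo); processes/filtrations are functions
   on R of which only the values at t >= 0 matter. *)
Definition filtr := R -> set (set Omega).
Definition process := R -> Omega -> R.

Definition Pnull P (A : set Omega) : Prop :=
  exists N, [/\ measurable N, P N = 0%E & A `<=` N].

Definition is_filtration (H : filtr) : Prop :=
  (forall t, 0 <= t -> sigma_algebra setT (H t)) /\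
  (forall t, 0 <= t -> H t `<=` measurable) /\
  (forall s t, 0 <= s -> s <= t -> H s `<=` H t).

Definition usual_conditions P (H : filtr) : Prop :=
  [/\ is_filtration H,
      (forall A, Pnull P A -> H 0 A) &
      (forall t, 0 <= t -> H t = [set A | forall u, t < u -> H u A])].

Definition subfiltration (F H : filtr) : Prop :=
  forall t, 0 <= t -> F t `<=` H t.

Definition adapted (H : filtr) (X : process) : Prop :=
  forall t, 0 <= t -> forall B : set R, measurable B -> H t (X t @^-1` B).

Definition cadlag (X : process) : Prop :=
  forall w, (forall t, 0 <= t -> X s w @[s --> t^'+] --> X t w) /\
            (forall t, 0 < t -> cvg (X s w @[s --> t^'-])).

(* augmented (right-continuous, completed) natural filtration of X *)
Definition natural_filtration P (X : process) : filtr :=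
  fun t => [set A | forall u, t < u ->
     smallest (sigma_algebra setT)
       ([set C | exists s B, [/\ 0 <= s, s <= u, measurable (B : set R) &
                                 C = X s @^-1` B]] `|` Pnull P) A].

Definition stopping_time (H : filtr) (sigma : Omega -> \bar R) : Prop :=
  (forall w, (0 <= sigma w)%E) /\
  (forall t, 0 <= t -> H t [set w | (sigma w <= t%:E)%E]).

Definition stopped (X : process) (sigma : Omega -> \bar R) : process :=
  fun t w => X (fine (Order.min t%:E (sigma w))) w.

(* (P,H)-martingale, with the martingale property stated through integrals
   over the events of H_s (no conditional expectation in the library) *)
Definition martingale P (H : filtr) (Y : process) : Prop :=
  [/\ adapted H Y,
      (forall t, 0 <= t -> P.-integrable setT (fun w => (Y t w)%:E)) &
      (forall s t, 0 <= s -> s <= t -> forall A, H s A ->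
         (\int[P]_(w in A) (Y t w)%:E = \int[P]_(w in A) (Y s w)%:E)%E)].

Definition local_martingale P (H : filtr) (X : process) : Prop :=
  adapted H X /\
  exists sigma : nat -> Omega -> \bar R,
    [/\ (forall n, stopping_time H (sigma n)),
        (forall n w, (sigma n w <= sigma n.+1 w)%E),
        (exists N, [/\ measurable N, P N = 0%E &
           forall w, ~ N w -> sigma n w @[n --> \oo] --> +oo%E]) &
        (forall n, martingale P H (stopped X (sigma n)))].

Definition filtr_infty (H : filtr) : set (set Omega) :=
  smallest (sigma_algebra setT) (\bigcup_(t in [set t : R | 0 <= t]) H t).

Definition filtr_at (H : filtr) (sigma : Omega -> R) : set (set Omega) :=
  [set A | filtr_infty H A /\
     forall t, 0 <= t -> H t (A `&` [set w | sigma w <= t])].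

Definition tau_n (X : process) (n : nat) (w : Omega) : R :=
  fine (Order.min (n%:R)%:E
         (ereal_inf [set (t%:E)%E | t in [set t : R | 0 <= t /\ n%:R <= X t w]])).

Definition filtr_tau_minus (H : filtr) (X : process) : set (set Omega) :=
  smallest (sigma_algebra setT) (\bigcup_n filtr_at H (tau_n X n)).

Definition prob_on (S : set (set Omega)) (Q : set Omega -> \bar R) : Prop :=
  [/\ Q set0 = 0%E, Q setT = 1%E,
      (forall A, S A -> (0 <= Q A)%E) &
      (forall A : nat -> set Omega, (forall n, S (A n)) -> trivIset setT A ->
         (fun n => \sum_(0 <= i < n) Q (A i))%E @ \oo --> Q (\bigcup_n A n))].

(* Q is a Foellmer-measure extension: on H_{tau-} it coincides with the
   Foellmer measure Q_0, i.e. with Q_n (dQ_n = X_{tau_n} dP) on every H_{tau_n}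
   (Q_0 is by definition the measure on H_{tau-} agreeing with every Q_n). *)
Definition agrees_with_follmer P (H : filtr) (X : process)
    (Q : set Omega -> \bar R) : Prop :=
  forall n A, filtr_at H (tau_n X n) A ->
    Q A = (\int[P]_(w in A) (X (tau_n X n w) w)%:E)%E.

Definition EMEP_solvable P (F H : filtr) (X : process) : Prop :=
  exists Q : set Omega -> \bar R,
    [/\ prob_on (filtr_infty H) Q,
        agrees_with_follmer P H X Q &
        (forall t, 0 <= t -> forall A, F t A -> (P A = 0%E <-> Q A = 0%E))].

End Defs.

Set Implicit Arguments.
From HB Require Import structures.
From mathcomp Require Import all_boot all_order all_algebra.
From mathcomp Require Import all_classical all_reals all_analysis.
Import Order.TTheory GRing.Theory Num.Theory.
Local Open Scope classical_set_scope.
Local Open Scope ring_scope.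

(* Since X is G-adapted and G is complete and right-continuous, the augmented
   natural filtration F^X of X is contained in G.  The extension problem for
   F ⊆ H only shrinks as H does (H_oo, the sigma-algebras H_{tau_n} and the
   Föllmer condition are all monotone in H), so a solution Q for F ⊆ G,
   restricted to F^X_oo, solves the problem for F ⊆ F^X. *)

Section Monotonicity.
Context {d : measure_display} {Omega : measurableType d} {R : realType}.

Lemma natural_filtration_sub (P : probability Omega R) (G : R -> set (set Omega))
    (X : R -> Omega -> R) :
  usual_conditions P G -> adapted G X ->
  subfiltration (natural_filtration P X) G.
Proof.
move=> [[Gsigma [_ Gmono]] Gnull Gright] Xadapted t t0 A HA.
rewrite (Gright t t0) => u tu.
have u0 : 0 <= u := le_trans t0 (ltW tu).
apply: (smallest_sub (Gsigma u u0)) (HA u tu).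
move=> C [[s [B [s0 su mB ->]]] | Cnull].
- exact: Gmono s u s0 su _ (Xadapted s s0 B mB).
- exact: Gmono 0 u (lexx _) u0 _ (Gnull _ Cnull).
Qed.

Lemma filtr_infty_sub (H1 H2 : R -> set (set Omega)) :
  subfiltration H1 H2 -> filtr_infty H1 `<=` filtr_infty H2.
Proof.
move=> H12; apply: smallest_sub; first exact: smallest_sigma_algebra.
move=> A [t t0 HA]; apply: (@sub_smallest _ _ _ [set A]) => // _ ->.
by exists t => //; apply: H12.
Qed.

Lemma filtr_at_sub (H1 H2 : R -> set (set Omega)) (sigma : Omega -> R) :
  subfiltration H1 H2 -> filtr_at H1 sigma `<=` filtr_at H2 sigma.
Proof.
move=> H12 A [HAinfty HAt]; split; first exact: filtr_infty_sub HAinfty.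
by move=> t t0; apply: H12 (HAt t t0).
Qed.

Lemma prob_on_sub (S1 S2 : set (set Omega)) (Q : set Omega -> \bar R) :
  S1 `<=` S2 -> prob_on S2 Q -> prob_on S1 Q.
Proof.
move=> S12 [Q0 Q1 Qge0 Qsigma_additive]; split=> //.
- by move=> A /S12; exact: Qge0.
- by move=> A SA; apply: Qsigma_additive => n; exact: S12.
Qed.

Lemma agrees_with_follmer_sub (P : probability Omega R) (H1 H2 : R -> set (set Omega))
    (X : R -> Omega -> R) (Q : set Omega -> \bar R) :
  subfiltration H1 H2 ->
  agrees_with_follmer P H2 X Q -> agrees_with_follmer P H1 X Q.
Proof. by move=> H12 QH2 n A HA; apply: QH2; exact: filtr_at_sub HA. Qed.

Lemma EMEP_solvable_sub (P : probability Omega R) (F H1 H2 : R -> set (set Omega))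
    (X : R -> Omega -> R) :
  subfiltration H1 H2 -> EMEP_solvable P F H2 X -> EMEP_solvable P F H1 X.
Proof.
move=> H12 [Q [Qprob Qfollmer Qequiv]]; exists Q; split=> //.
- exact: prob_on_sub (filtr_infty_sub H12) Qprob.
- exact: agrees_with_follmer_sub H12 Qfollmer.
Qed.

End Monotonicity.

Theorem mainTheorem6 (d : measure_display) (Omega : measurableType d)
  (R : realType) (P : probability Omega R) (F G : R -> set (set Omega))
  (X : R -> Omega -> R) :
  usual_conditions P G -> usual_conditions P F ->
  subfiltration F G ->
  subfiltration F (natural_filtration P X) ->
  cadlag X ->
  (forall t w, 0 <= t -> 0 < X t w) ->
  (forall w, X 0 w = 1) ->
  local_martingale P G X ->
  EMEP_solvable P F G X ->
  EMEP_solvable P F (natural_filtration P X) X.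
Proof.
move=> Gusual _ _ _ _ _ _ [Xadapted _].
exact: (EMEP_solvable_sub (natural_filtration_sub Gusual Xadapted)).
Qed.
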